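(* Let $n,m,T$ be positive integers, $\epsilon\ge 0$, and let $x(0),\dots,x(T)\in\mathbb{R}^n$ and $u(0),\dots,u(T-1)\in\mathbb{R}^m$ be given data. For $i\in\{0,\dots,T-1\}$ let $$\mathcal{C}_i:=\{(A,B)\in\mathbb{R}^{n\times n}\times\mathbb{R}^{n\times m}:\ \exists d\in\mathbb{R}^n \text{ with } x(i+1)=Ax(i)+Bu(i)+d,\ dd^\top\preceq\epsilon I\},$$ and $\mathcal{I}:=\bigcap_{i=0}^{T-1}\mathcal{C}_i$. Suppose there exist $P\in\mathbb{R}^{n\times n}$ symmetric, $Y\in\mathbb{R}^{m\times n}$, and scalars $\beta,\tau_0,\dots,\tau_{T-1}$ with $\beta>0$, $\tau_i\ge 0$ for all $i$, $P\succ 0$, and $$\begin{bmatrix} P-\beta I & 0 & 0 & 0\\ 0 & -P & -Y^\top & 0\\ 0 & -Y & 0 & Y\\ 0 & 0 & Y^\top & P\end{bmatrix}-\sum_{i=0}^{T-1}\tau_i\begin{bmatrix} I & x(i+1)\\ 0 & -x(i)\\ 0 & -u(i)\\ 0 & 0\end{bmatrix}\begin{bmatrix}\epsilon I & 0\\ 0 & -1\end{bmatrix}\begin{bmatrix} I & x(i+1)\\ 0 & -x(i)\\ 0 & -u(i)\\ 0 & 0\end{bmatrix}^\top\succeq 0.$$ Then there exist a symmetric $P\succ 0$ and $K\in\mathbb{R}^{m\times n}$ such that $(A+BK)P(A+BK)^\top-P\prec 0$ for all $(A,B)\in\mathcal{I}$.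
   Context: $\succ$ ($\succeq$) and $\prec$ ($\preceq$) denote positive (semi)definiteness and negative (semi)definiteness of symmetric matrices. In the displayed block matrices, the block rows/columns have sizes $n,n,m,n$ (first matrix) and the $4\times 2$ block matrices have row-block sizes $n,n,m,n$ and column-block sizes $n,1$; the zero blocks and identity blocks have compatible dimensions. *)

From mathcomp Require Import all_boot all_order all_algebra.
Set Implicit Arguments. Unset Strict Implicit. Unset Printing Implicit Defensive.
Import Order.TTheory GRing.Theory Num.Theory.
Local Open Scope ring_scope.

Definition psd {R : realFieldType} {k : nat} (M : 'M[R]_k) : Prop :=
  M^T = M /\ forall v : 'rV[R]_k, 0 <= (v *m M *m v^T) 0 0.

Definition pd {R : realFieldType} {k : nat} (M : 'M[R]_k) : Prop :=
  M^T = M /\ forall v : 'rV[R]_k, v != 0 -> 0 < (v *m M *m v^T) 0 0.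

Definition nd {R : realFieldType} {k : nat} (M : 'M[R]_k) : Prop := pd (- M).

Definition loewner_le {R : realFieldType} {k : nat} (A B : 'M[R]_k) : Prop :=
  psd (B - A).

Definition consistent {R : realFieldType} {n m : nat} (eps : R)
  (xi xi1 : 'cV[R]_n) (ui : 'cV[R]_m) (A : 'M[R]_n) (B : 'M[R]_(n, m)) : Prop :=
  exists d : 'cV[R]_n, xi1 = A *m xi + B *m ui + d /\ loewner_le (d *m d^T) (eps%:M).

Definition lmi_base {R : realFieldType} {n m : nat} (beta : R)
  (P : 'M[R]_n) (Y : 'M[R]_(m, n)) : 'M[R]_(n + n + m + n) :=
  block_mx
    (block_mx
       (block_mx (P - beta%:M) 0 0 (- P))
       (col_mx 0 (- Y^T))
       (row_mx 0 (- Y))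
       0)
    (col_mx (col_mx 0 0) Y)
    (row_mx (row_mx 0 0) Y^T)
    P.

Definition data_mx {R : realFieldType} {n m : nat}
  (xi xi1 : 'cV[R]_n) (ui : 'cV[R]_m) : 'M[R]_(n + n + m + n, n + 1) :=
  col_mx (col_mx (col_mx (row_mx 1%:M xi1) (row_mx 0 (- xi)))
                 (row_mx 0 (- ui)))
         (row_mx 0 0).

Definition noise_mx {R : realFieldType} {n : nat} (eps : R) : 'M[R]_(n + 1) :=
  block_mx (eps%:M) 0 0 (-1)%:M.

From mathcomp Require Import all_boot all_order all_algebra.
From mathcomp Require Import ring lra.
Import Order.TTheory GRing.Theory Num.Theory.
Local Open Scope ring_scope.

(* Take K := Y P^-1 and test the LMI along v = [a, aA, aB, -aBK] for a row
   vector a.  With M = A + BK, the first block evaluates to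
   a (P - M P M^T) a^T - beta |a|^2, and the i-th data block evaluates to
   a (eps I - d_i d_i^T) a^T >= 0, where d_i = x(i+1) - A x(i) - B u(i) is the
   noise of sample i.  As tau_i >= 0, the LMI forces
   a (P - M P M^T) a^T >= beta |a|^2 > 0. *)

Section LMICertificate.
Context {R : realFieldType}.

Lemma pd_unitmx k (P : 'M[R]_k) : pd P -> P \in unitmx.
Proof.
move=> [_ Ppos]; rewrite unitmxE unitfE; apply/negP => /det0P [v v0 vP].
by move: (Ppos v v0); rewrite vP mul0mx mxE ltxx.
Qed.

Lemma mulmx_tr_gt0 k (a : 'rV[R]_k) : a != 0 -> 0 < (a *m a^T) 0 0.
Proof.
move=> a0; have [j aj0] : exists j, a 0 j != 0.
  apply/existsP; apply: contraR a0 => /existsPn a_eq0; apply/eqP/matrixP => i j.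
  by rewrite !mxE (ord1 i); move/negPn: (a_eq0 j) => /eqP ->.
rewrite mxE (bigD1 j) //= ltr_pwDl //.
  by rewrite mxE -expr2 lt_def sqrf_eq0 aj0 sqr_ge0.
by apply: sumr_ge0 => i _; rewrite mxE -expr2 sqr_ge0.
Qed.

Lemma mulmx_sub_sum_tr k (v : 'rV[R]_k) (M : 'M[R]_k)
    (I : Type) (r : seq I) (c : I -> R) (N : I -> 'M[R]_k) :
  (v *m (M - \sum_(i <- r) c i *: N i) *m v^T) 0 0
  = (v *m M *m v^T) 0 0 - \sum_(i <- r) c i * (v *m N i *m v^T) 0 0.
Proof.
rewrite mulmxBr mulmxBl mulmx_sumr mulmx_suml mxE [X in _ + X]mxE summxE.
by congr (_ - _); apply: eq_bigr => i _; rewrite -scalemxAr -scalemxAl mxE.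
Qed.

Context {n m : nat}.

Definition lmi_direction (a : 'rV[R]_n) (A : 'M[R]_n) (B : 'M[R]_(n, m))
    (K : 'M[R]_(m, n)) : 'rV[R]_(n + n + m + n) :=
  row_mx (row_mx (row_mx a (a *m A)) (a *m B)) (- (a *m B *m K)).

Lemma lmi_base_direction (beta : R) P A B K a : P^T = P ->
  (lmi_direction a A B K *m lmi_base beta P (K *m P) *m (lmi_direction a A B K)^T) 0 0
  = (a *m (P - (A + B *m K) *m P *m (A + B *m K)^T) *m a^T) 0 0
    - beta * (a *m a^T) 0 0.
Proof.
move=> Psym; rewrite /lmi_direction /lmi_base.
rewrite !(mul_row_block, mul_row_col, tr_row_mx, mul_mx_row, mulmx0, mul0mx,
  add0r, addr0, add_row_mx, mulmxN, mulNmx, mulmxDl, mulmxDr, mulmxBl, mulmxBr).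
rewrite !(raddfN, raddfD) /= !(trmx_mul, trmxK, Psym).
rewrite !(mulmxDl, mulmxDr, mulmxN, mulNmx, mul_mx_scalar, mulmxA).
rewrite -!scalemxAl -!trace_mx11 !(raddfN, raddfD) /= !mxtraceZ.
ring.
Qed.

Lemma lmi_direction_data (xi xi1 : 'cV[R]_n) (ui : 'cV[R]_m) A B K a :
  lmi_direction a A B K *m data_mx xi xi1 ui
  = row_mx a (a *m (xi1 - A *m xi - B *m ui)).
Proof.
by rewrite /lmi_direction /data_mx !(mul_row_col, mul_mx_row, mulmx0, mulmx1,
  addr0, add_row_mx, mulmxN, mulmxBr, mulmxA).
Qed.

Lemma noise_mx_quad (eps : R) (a : 'rV[R]_n) (c : 'M[R]_1) :
  row_mx a c *m noise_mx eps *m (row_mx a c)^T = eps *: (a *m a^T) - c *m c^T.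
Proof.
rewrite /noise_mx mul_row_block tr_row_mx mul_row_col !mulmx0 addr0 add0r.
by rewrite !mul_mx_scalar scaleN1r -scalemxAl mulNmx.
Qed.

Lemma data_noise_direction (eps : R) (xi xi1 : 'cV[R]_n) (ui : 'cV[R]_m) A B K a :
  lmi_direction a A B K *m (data_mx xi xi1 ui *m noise_mx eps *m (data_mx xi xi1 ui)^T)
    *m (lmi_direction a A B K)^T
  = a *m (eps%:M - (xi1 - A *m xi - B *m ui) *m (xi1 - A *m xi - B *m ui)^T) *m a^T.
Proof.
rewrite [in RHS]mulmxBr [in RHS]mulmxBl mul_mx_scalar -scalemxAl.
by rewrite -!mulmxA -!trmx_mul !mulmxA lmi_direction_data noise_mx_quad.
Qed.

Lemma consistent_data_noise_ge0 (eps : R) xi xi1 ui A B K a :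
  consistent eps xi xi1 ui A B ->
  0 <= (lmi_direction a A B K
          *m (data_mx xi xi1 ui *m noise_mx eps *m (data_mx xi xi1 ui)^T)
          *m (lmi_direction a A B K)^T) 0 0.
Proof.
move=> [d [-> [_ noise_bound]]]; rewrite data_noise_direction.
by rewrite -addrA -opprD (addrC _ d) addrK; apply: noise_bound.
Qed.

End LMICertificate.

Theorem proposition1 (R : realFieldType) (n m T : nat)
  (hn : (0 < n)%N) (hm : (0 < m)%N) (hT : (0 < T)%N)
  (eps : R) (heps : 0 <= eps)
  (x : nat -> 'cV[R]_n) (u : nat -> 'cV[R]_m) :
  (exists (P : 'M[R]_n) (Y : 'M[R]_(m, n)) (beta : R) (tau : nat -> R),
      P^T = P /\ 0 < beta /\ (forall i, (i < T)%N -> 0 <= tau i) /\ pd P /\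
      psd (lmi_base beta P Y -
           \sum_(0 <= i < T) tau i *: (data_mx (x i) (x i.+1) (u i)
                                        *m noise_mx eps
                                        *m (data_mx (x i) (x i.+1) (u i))^T))) ->
  exists (P : 'M[R]_n) (K : 'M[R]_(m, n)),
    P^T = P /\ pd P /\
    forall (A : 'M[R]_n) (B : 'M[R]_(n, m)),
      (forall i, (i < T)%N -> consistent eps (x i) (x i.+1) (u i) A B) ->
      nd ((A + B *m K) *m P *m (A + B *m K)^T - P).
Proof.
move=> [P [Y [beta [tau [Psym [beta_gt0 [tau_ge0 [Ppd [_ lmi_psd]]]]]]]]].
pose K := Y *m invmx P.
have YK : Y = K *m P by rewrite mulmxKV // pd_unitmx.
exists P, K; split=> //; split=> // A B consistentAB; split.
  by rewrite !raddfN !raddfB /= !trmx_mul trmxK Psym mulmxA.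
move=> a a0; rewrite opprB.
have := lmi_psd (lmi_direction a A B K).
rewrite mulmx_sub_sum_tr YK lmi_base_direction //.
have data_ge0 : 0 <= \sum_(0 <= i < T) tau i *
    (lmi_direction a A B K
       *m (data_mx (x i) (x i.+1) (u i) *m noise_mx eps
             *m (data_mx (x i) (x i.+1) (u i))^T)
       *m (lmi_direction a A B K)^T) 0 0.
  rewrite big_nat_cond; apply: sumr_ge0 => i /andP [/andP [_ iT] _].
  by rewrite mulr_ge0 ?tau_ge0 //; apply: consistent_data_noise_ge0; exact: consistentAB.
have : 0 < beta * (a *m a^T) 0 0 by apply: mulr_gt0 => //; exact: mulmx_tr_gt0.
lra.
Qed.
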